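(* Let $D$ be a positive squarefree integer with $N(\varepsilon)=-1$, and let $\ell=4$ if $D\equiv1\bmod4$ and $\ell=1$ otherwise. Then for $\operatorname{Re}s>0$, \[ Z_D^{\mathrm{odd}}(s)=\frac14\sum_{n\ge1}\frac{r_1(n)\,r_1(Dn-\ell)}{n^{s/2}},\qquad Z_D^{\mathrm{even}}(s)=\frac14\sum_{n\ge1}\frac{r_1(n)\,r_1(Dn+\ell)}{n^{s/2}}. \]
   Context: $r_1(n)=\#\{x\in\mathbb{Z}:x^2=n\}$ (so $r_1(n)=0$ for negative $n$). $\mathcal{O}_D$ is the ring of integers of $\mathbb{Q}(\sqrt D)\subset\mathbb{R}$, $\varepsilon>1$ its fundamental unit, $\overline{\varepsilon}$ its conjugate, $N$ the norm. $q=D$ if $D\equiv1\bmod4$, else $q=4D$. $F_D(n)=(\varepsilon^n-\overline{\varepsilon}^{\,n})/\sqrt q$. $Z_D^{\mathrm{odd}}(s)=\sum_{n\ge1}F_D(2n-1)^{-s}$ and $Z_D^{\mathrm{even}}(s)=\sum_{n\ge1}F_D(2n)^{-s}$. *)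

From Stdlib Require Import Reals ZArith List Lra.
From Coquelicot Require Import Coquelicot.
Open Scope R_scope.

Definition squarefree (D : Z) : Prop :=
  forall k : Z, (k * k | D)%Z -> k = 1%Z \/ k = (-1)%Z.

(* r_1(n) = #{x in Z : x^2 = n}.  Every solution satisfies |x| <= |n|,
   so we count over the finite range [-|n|, |n|]. *)
Definition r1 (n : Z) : R :=
  INR (length (filter (fun x => Z.eqb (x * x) n)
    (map (fun k => (Z.of_nat k - Z.abs n)%Z)
         (seq 0 (Z.to_nat (2 * Z.abs n + 1)))))).

(* Elements of Q(sqrt D) written as (a + b sqrt D)/2 with a b integers. *)
Definition qval (D a b : Z) : R := (IZR a + IZR b * sqrt (IZR D)) / 2.
Definition qconj (D a b : Z) : R := (IZR a - IZR b * sqrt (IZR D)) / 2.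
Definition qnorm (D a b : Z) : R := IZR (a * a - D * b * b) / 4.

Definition inOD (D a b : Z) : Prop :=
  if Z.eqb (Z.modulo D 4) 1 then Z.even (a - b) = true
  else Z.even a = true /\ Z.even b = true.

Definition isUnitOD (D a b : Z) : Prop :=
  inOD D a b /\ (qnorm D a b = 1 \/ qnorm D a b = -1).

Definition isFundUnit (D a b : Z) : Prop :=
  isUnitOD D a b /\ 1 < qval D a b /\
  forall c d : Z, isUnitOD D c d -> 1 < qval D c d -> qval D a b <= qval D c d.

Definition qD (D : Z) : R := if Z.eqb (Z.modulo D 4) 1 then IZR D else 4 * IZR D.

Definition FD (D a b : Z) (n : nat) : R :=
  (qval D a b ^ n - qconj D a b ^ n) / sqrt (qD D).

Definition cpow_neg (x : R) (s : C) : C :=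
  (exp (- Re s * ln x) * cos (- Im s * ln x),
   exp (- Re s * ln x) * sin (- Im s * ln x)).

(* n-th term (n >= 1, written k.+1) of Z^odd and Z^even *)
Definition Zodd_term (D a b : Z) (s : C) (k : nat) : C := cpow_neg (FD D a b (2 * k + 1)) s.
Definition Zeven_term (D a b : Z) (s : C) (k : nat) : C := cpow_neg (FD D a b (2 * k + 2)) s.


Definition ellD (D : Z) : Z := if Z.eqb (Z.modulo D 4) 1 then 4%Z else 1%Z.

Definition dir_odd_term (D : Z) (s : C) (k : nat) : C :=
  Cmult (RtoC (/ 4 * r1 (Z.of_nat (S k)) * r1 (D * Z.of_nat (S k) - ellD D)))
        (cpow_neg (INR (S k)) (Cmult s (RtoC (/ 2)))).
Definition dir_even_term (D : Z) (s : C) (k : nat) : C :=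
  Cmult (RtoC (/ 4 * r1 (Z.of_nat (S k)) * r1 (D * Z.of_nat (S k) + ellD D)))
        (cpow_neg (INR (S k)) (Cmult s (RtoC (/ 2)))).

(* Since [eps] is the smallest unit above 1, every unit [u >= 1] of [O_D] is a power
   [eps^m] (divide by [eps] until [1 <= u < eps]), and [N(eps^m) = (-1)^m].  Writing
   [eps^m = (x + y sqrt D)/2] if [D = 1 mod 4] and [eps^m = x + y sqrt D] otherwise, one
   gets [F_D(m) = y] and [x^2 - D y^2 = (-1)^m l]; conversely a positive solution of
   [x^2 - D y^2 = -+l] is such a unit.  So [r_1(n) r_1(Dn -+ l)] equals 4 when
   [n = F_D(m)^2] with [m] odd (resp. even) and vanishes otherwise ([x <> 0] because [D]
   is squarefree), while [n^(-s/2) = F_D(m)^(-s)].  As [F_D] increases strictly along each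
   parity class, the Dirichlet series is [Z_D] with zero terms interleaved, and both
   converge because [F_D(m) >= eps^m / (1 + sqrt q)]. *)

From Stdlib Require Import Reals ZArith Lia Lra List ClassicalEpsilon.
From Coquelicot Require Import Coquelicot.
Open Scope R_scope.

Lemma inOD_mul D c d a b : inOD D c d -> inOD D a b ->
  exists X Y, (2 * X = c * a + D * d * b)%Z /\ (2 * Y = c * b + d * a)%Z /\ inOD D X Y.
Proof.
  unfold inOD. destruct (Z.eqb_spec (D mod 4) 1) as [HD|_].
  - rewrite !Z.even_spec. intros [u Hu] [v Hv].
    pose proof (Z.div_mod D 4 ltac:(lia)) as Hw. rewrite HD in Hw.
    set (w := (D / 4)%Z) in Hw. clearbody w.
    exists (d*b + u*b + v*d + 2*u*v + 2*w*d*b)%Z, (d*b + u*b + v*d)%Z.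
    replace c with (d + 2*u)%Z by lia. replace a with (b + 2*v)%Z by lia. subst D.
    split; [ring | split; [ring |]]. apply Z.even_spec. exists (u*v + w*d*b)%Z. ring.
  - rewrite !Z.even_spec. intros [[c' ->] [d' ->]] [[a' ->] [b' ->]].
    exists (2 * (c'*a' + D*d'*b'))%Z, (2 * (c'*b' + d'*a'))%Z.
    split; [ring | split; [ring |]].
    split; apply Z.even_spec; eexists; reflexivity.
Qed.

Section QuadraticIntegers.

Variable D : Z.
Hypothesis D_ge0 : (0 <= D)%Z.

Lemma sqrt_IZR_mul_self : sqrt (IZR D) * sqrt (IZR D) = IZR D.
Proof. apply sqrt_sqrt, IZR_le, D_ge0. Qed.

Lemma qval_mul_qconj c d : qval D c d * qconj D c d = qnorm D c d.
Proof.
  unfold qval, qconj, qnorm. rewrite minus_IZR, !mult_IZR.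
  pose proof sqrt_IZR_mul_self as Hs. set (r := sqrt (IZR D)) in Hs |- *.
  rewrite <- Hs. field.
Qed.

Lemma qval_qconj_mul c d a b X Y :
  (2 * X = c * a + D * d * b)%Z -> (2 * Y = c * b + d * a)%Z ->
  qval D X Y = qval D c d * qval D a b /\ qconj D X Y = qconj D c d * qconj D a b.
Proof.
  intros HX HY. apply (f_equal IZR) in HX, HY.
  rewrite !plus_IZR, !mult_IZR in HX. rewrite !plus_IZR, !mult_IZR in HY.
  unfold qval, qconj.
  replace (IZR X) with ((IZR c * IZR a + IZR D * IZR d * IZR b) / 2) by lra.
  replace (IZR Y) with ((IZR c * IZR b + IZR d * IZR a) / 2) by lra.
  pose proof sqrt_IZR_mul_self as Hs. set (r := sqrt (IZR D)) in Hs |- *.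
  rewrite <- Hs. split; field.
Qed.

Lemma isUnitOD_mul c d a b : isUnitOD D c d -> isUnitOD D a b ->
  exists X Y, isUnitOD D X Y /\ qval D X Y = qval D c d * qval D a b /\
              qconj D X Y = qconj D c d * qconj D a b.
Proof.
  intros [Hcd Ncd] [Hab Nab].
  destruct (inOD_mul D c d a b Hcd Hab) as (X & Y & HX & HY & HXY).
  destruct (qval_qconj_mul c d a b X Y HX HY) as [Eval Econj].
  exists X, Y. repeat split; try assumption.
  rewrite <- qval_mul_qconj in Ncd, Nab |- *. rewrite Eval, Econj.
  replace (qval D c d * qval D a b * (qconj D c d * qconj D a b))
    with (qval D c d * qconj D c d * (qval D a b * qconj D a b)) by ring.
  destruct Ncd as [-> | ->]; destruct Nab as [-> | ->]; lra.
Qed.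

Lemma isUnitOD_one : isUnitOD D 2 0 /\ qval D 2 0 = 1 /\ qconj D 2 0 = 1.
Proof.
  unfold isUnitOD, inOD, qnorm, qval, qconj. rewrite !Z.mul_0_r. repeat split.
  - destruct (D mod 4 =? 1)%Z; repeat split.
  - left. simpl. lra.
  - lra.
  - lra.
Qed.

Lemma isUnitOD_pow a b : isUnitOD D a b -> forall m,
  exists c d, isUnitOD D c d /\ qval D c d = qval D a b ^ m /\ qconj D c d = qconj D a b ^ m.
Proof.
  intros Hab m. induction m as [|m (c & d & Hcd & Eval & Econj)].
  - exists 2%Z, 0%Z. exact isUnitOD_one.
  - destruct (isUnitOD_mul c d a b Hcd Hab) as (X & Y & HXY & Fval & Fconj).
    exists X, Y. rewrite Fval, Fconj, Eval, Econj. simpl. split; [exact HXY | split; ring].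
Qed.

End QuadraticIntegers.

(* [-(a - b sqrt D)/2] is [((a + b sqrt D)/2)^-1] up to the sign of the norm. *)
Lemma isUnitOD_opp_conj D a b : isUnitOD D a b ->
  isUnitOD D (- a) b /\ qval D (- a) b = - qconj D a b /\ qconj D (- a) b = - qval D a b.
Proof.
  intros [Hab Nab]. unfold qval, qconj. rewrite opp_IZR. repeat split; try lra.
  - unfold inOD in *. destruct (D mod 4 =? 1)%Z; rewrite ?Z.even_opp; [|exact Hab].
    rewrite <- Z.even_opp. replace (- (- a - b))%Z with (a - b + 2 * b)%Z by ring.
    rewrite Z.even_add_mul_2. exact Hab.
  - unfold qnorm in *. replace (- a * - a)%Z with (a * a)%Z by ring. exact Nab.
Qed.

Definition minus_one_pow (m : nat) : Z := if Nat.even m then 1%Z else (-1)%Z.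

Lemma IZR_minus_one_pow m : IZR (minus_one_pow m) = (-1) ^ m.
Proof.
  induction m as [|m IH]; [reflexivity|].
  change ((-1) ^ S m) with (-1 * (-1) ^ m). rewrite <- IH. unfold minus_one_pow.
  rewrite Nat.even_succ, <- Nat.negb_even. destruct (Nat.even m); simpl; lra.
Qed.

Lemma minus_one_pow_add_double k p : minus_one_pow (2 * k + p) = minus_one_pow p.
Proof. unfold minus_one_pow. rewrite Nat.add_comm, Nat.even_add_mul_2. reflexivity. Qed.

Lemma squarefree_mul_sqr_neq4 D d : (1 < D)%Z -> squarefree D -> (d * d * D <> 4)%Z.
Proof.
  intros HD Hsq E.
  assert (D = 4%Z) as -> by (assert (d = -1 \/ d = 1)%Z as [-> | ->] by nia; lia).
  destruct (Hsq 2%Z) as [H | H]; [exists 1%Z; reflexivity | discriminate | discriminate].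
Qed.

Lemma pell_x_neq0 D x y nu : (1 < D)%Z -> squarefree D -> y <> 0%Z ->
  (nu = 1 \/ nu = -1)%Z -> (x * x - D * y * y = nu * ellD D)%Z -> x <> 0%Z.
Proof.
  intros HD Hsq Hy Hnu E ->. unfold ellD in E.
  destruct (D mod 4 =? 1)%Z; destruct Hnu as [-> | ->]; try nia.
  apply (squarefree_mul_sqr_neq4 D y HD Hsq). lia.
Qed.

Lemma sqrt_qD D : (0 <= D)%Z ->
  sqrt (qD D) = if (D mod 4 =? 1)%Z then sqrt (IZR D) else 2 * sqrt (IZR D).
Proof.
  intro HD. unfold qD. destruct (D mod 4 =? 1)%Z; [reflexivity|].
  rewrite sqrt_mult by (try lra; apply IZR_le, HD).
  replace 4 with (2 * 2) by ring. rewrite sqrt_square by lra. reflexivity.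
Qed.

Lemma sqrt_qD_pos D : (1 < D)%Z -> 0 < sqrt (qD D).
Proof.
  intro HD. apply sqrt_lt_R0. unfold qD.
  assert (0 < IZR D) by (apply IZR_lt; lia). destruct (D mod 4 =? 1)%Z; lra.
Qed.

(* A solution of [x^2 - D y^2 = +-l] in positive integers is the unit [x + y sqrt D]
   (times 1/2 when [D = 1 mod 4]), whose [sqrt D]-coordinate gives [y]. *)
Lemma pell_unit D x y nu : (1 < D)%Z -> (0 < x)%Z -> (0 < y)%Z -> (nu = 1 \/ nu = -1)%Z ->
  (x * x - D * y * y = nu * ellD D)%Z ->
  exists c d, isUnitOD D c d /\ qnorm D c d = IZR nu /\ 1 < qval D c d /\
              IZR d * sqrt (IZR D) / sqrt (qD D) = IZR y.
Proof.
  intros HD Hx Hy Hnu Hxy.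
  assert (HsD : 1 < sqrt (IZR D)).
  { rewrite <- sqrt_1. apply sqrt_lt_1_alt. split; [lra | apply IZR_lt, HD]. }
  assert (Hgt1 : forall c d, (0 < c)%Z -> (0 < d)%Z -> 1 < qval D c d).
  { intros c d Hc Hd. unfold qval.
    assert (1 <= IZR c /\ 1 <= IZR d) as [Hc1 Hd1] by (split; apply IZR_le; lia).
    assert (sqrt (IZR D) <= IZR d * sqrt (IZR D)) by nra. lra. }
  assert (Hunit : forall c d, inOD D c d -> qnorm D c d = IZR nu -> isUnitOD D c d).
  { intros c d Hcd Hn. split; [exact Hcd|]. rewrite Hn. destruct Hnu as [-> | ->]; auto. }
  rewrite sqrt_qD by lia. unfold inOD, qnorm, ellD in *.
  destruct (Z.eqb_spec (D mod 4) 1) as [HD4|_].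
  - assert (Hn : IZR (x * x - D * y * y) / 4 = IZR nu) by (rewrite Hxy, mult_IZR; simpl; lra).
    assert (Hpar : Z.even (x - y) = true).
    { pose proof (Z.div_mod D 4 ltac:(lia)) as Hw. rewrite HD4 in Hw.
      set (w := (D / 4)%Z) in Hw. clearbody w.
      apply Z.even_spec. destruct (Z.Even_or_Odd (x - y)) as [Hev | [k Hk]]; [exact Hev|].
      replace x with (y + 2 * k + 1)%Z in Hxy by lia. subst D. exfalso.
      assert (2 * (2*k*y + y + 2*k*k + 2*k - 2*w*y*y) + 1 = 4 * nu)%Z by nia. lia. }
    exists x, y. split; [apply Hunit; assumption|].
    split; [exact Hn|]. split; [apply Hgt1; assumption|]. field. lra.
  - assert (Hn : IZR (2 * x * (2 * x) - D * (2 * y) * (2 * y)) / 4 = IZR nu).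
    { replace (2 * x * (2 * x) - D * (2 * y) * (2 * y))%Z with (4 * (x * x - D * y * y))%Z by ring.
      rewrite Hxy, !mult_IZR. simpl. lra. }
    assert (Hev : forall t, Z.even (2 * t) = true) by (intro t; apply Z.even_spec; eexists; reflexivity).
    exists (2 * x)%Z, (2 * y)%Z. split; [apply Hunit; [split; apply Hev | exact Hn]|].
    split; [exact Hn|]. split; [apply Hgt1; lia|]. rewrite mult_IZR. field. lra.
Qed.

Section FundamentalUnit.

Variables D a b : Z.
Hypothesis D_gt1 : (1 < D)%Z.
Hypothesis D_sqfree : squarefree D.
Hypothesis eps_fund : isFundUnit D a b.
Hypothesis eps_norm : qnorm D a b = -1.

Local Notation eps := (qval D a b).
Local Notation eps' := (qconj D a b).

Let D_ge0 : (0 <= D)%Z.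
Proof. lia. Qed.

Lemma eps_gt1 : 1 < eps.
Proof. apply eps_fund. Qed.

Lemma qconj_eps : eps' = - / eps.
Proof.
  pose proof eps_gt1. rewrite <- (qval_mul_qconj D D_ge0) in eps_norm.
  field_simplify_eq; lra.
Qed.

Lemma abs_qconj_eps_pow_le1 m : Rabs (eps' ^ m) <= 1.
Proof.
  pose proof eps_gt1. rewrite qconj_eps, <- RPow_abs, Rabs_Ropp, Rabs_inv, Rabs_pos_eq by lra.
  rewrite <- (pow1 m). apply pow_incr. split.
  - apply Rlt_le, Rinv_0_lt_compat. lra.
  - rewrite <- Rinv_1. apply Rinv_le_contravar; lra.
Qed.

Lemma qnorm_eps_pow c d m : qval D c d = eps ^ m -> qconj D c d = eps' ^ m ->
  qnorm D c d = IZR (minus_one_pow m).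
Proof.
  intros Eval Econj.
  rewrite <- (qval_mul_qconj D D_ge0), Eval, Econj, <- Rpow_mult_distr.
  rewrite (qval_mul_qconj D D_ge0), eps_norm, IZR_minus_one_pow. reflexivity.
Qed.

(* Since [eps] is the smallest unit above 1 and [N(eps) = -1], a unit in [[1, eps)]
   is 1; the alternative [1 = (d sqrt D)/2] would force [d^2 D = 4]. *)
Lemma unit_lt_eps c d : isUnitOD D c d -> 1 <= qval D c d < eps ->
  qval D c d = 1 /\ qconj D c d = 1.
Proof.
  intros Hcd [Hge Hlt].
  assert (Hval : qval D c d = 1).
  { destruct Hge as [Hgt | <-]; [|reflexivity].
    destruct eps_fund as (_ & _ & Hmin). specialize (Hmin c d Hcd Hgt). lra. }
  split; [exact Hval|].
  pose proof (qval_mul_qconj D D_ge0 c d) as Hprod. rewrite Hval in Hprod.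
  destruct Hcd as [_ [Hn | Hn]]; rewrite Hn in Hprod; [lra|].
  exfalso. unfold qval, qconj in Hval, Hprod.
  assert (IZR c = 0) as Hc0%eq_IZR by lra. subst c.
  assert (Hd : IZR d * sqrt (IZR D) = 2) by lra.
  apply (squarefree_mul_sqr_neq4 D d D_gt1 D_sqfree). apply eq_IZR.
  rewrite !mult_IZR, <- (sqrt_IZR_mul_self D D_ge0).
  replace (IZR d * IZR d * (sqrt (IZR D) * sqrt (IZR D)))
    with ((IZR d * sqrt (IZR D)) * (IZR d * sqrt (IZR D))) by ring.
  rewrite Hd. simpl. ring.
Qed.

Lemma unit_ge1_eps_pow c d : isUnitOD D c d -> 1 <= qval D c d ->
  exists m, qval D c d = eps ^ m /\ qconj D c d = eps' ^ m.
Proof.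
  pose proof eps_gt1 as He.
  destruct eps_fund as [Hab _].
  destruct (isUnitOD_opp_conj D a b Hab) as (Hinv & Iv & Ic).
  assert (Hdescent : forall N u v, isUnitOD D u v -> 1 <= qval D u v < eps ^ N ->
            exists m, qval D u v = eps ^ m /\ qconj D u v = eps' ^ m).
  { induction N as [|N IH]; intros u v Huv [H1 H2]; [simpl in H2; lra|].
    destruct (Rlt_or_le (qval D u v) eps) as [Hlt | Hge].
    { exists 0%nat. apply (unit_lt_eps u v Huv). lra. }
    destruct (isUnitOD_mul D D_ge0 u v (- a) b Huv Hinv) as (X & Y & HXY & Fv & Fc).
    rewrite Iv, qconj_eps in Fv. rewrite Ic in Fc.
    destruct (IH X Y HXY) as (m & Mv & Mc).
    - rewrite Fv. simpl in H2.
      replace (qval D u v * - - / eps) with (qval D u v / eps) by (field; lra).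
      split.
      + apply Rmult_le_reg_r with eps; [lra|]. field_simplify; lra.
      + apply Rmult_lt_reg_r with eps; [lra|]. field_simplify; lra.
    - exists (S m). simpl. rewrite <- Mv, <- Mc, Fv, Fc, qconj_eps. split; field; lra. }
  intros Hcd H1.
  destruct (Pow_x_infinity eps ltac:(rewrite Rabs_pos_eq; lra) (qval D c d + 1)) as [N HN].
  specialize (HN N (le_n N)). rewrite Rabs_pos_eq in HN by (apply pow_le; lra).
  apply (Hdescent N c d Hcd). lra.
Qed.

Lemma FD_eps_pow c d m : qval D c d = eps ^ m -> qconj D c d = eps' ^ m ->
  FD D a b m = IZR d * sqrt (IZR D) / sqrt (qD D).
Proof.
  intros Eval Econj. unfold FD. rewrite <- Eval, <- Econj. unfold qval, qconj. f_equal. field.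
Qed.

Lemma FD_pell m : exists x y, FD D a b m = IZR y /\
  (x * x - D * y * y = minus_one_pow m * ellD D)%Z.
Proof.
  destruct eps_fund as [Hab _].
  destruct (isUnitOD_pow D D_ge0 a b Hab m) as (c & d & [Hcd _] & Eval & Econj).
  pose proof (FD_eps_pow c d m Eval Econj) as HF.
  pose proof (qnorm_eps_pow c d m Eval Econj) as Hn. unfold qnorm in Hn.
  assert (Hcd4 : (c * c - D * d * d = 4 * minus_one_pow m)%Z)
    by (apply eq_IZR; rewrite mult_IZR; lra).
  assert (0 < sqrt (IZR D)) by (apply sqrt_lt_R0, IZR_lt; lia).
  rewrite sqrt_qD in HF by exact D_ge0.
  unfold inOD, ellD in *. destruct (D mod 4 =? 1)%Z.
  - exists c, d. split; [rewrite HF; field; lra | lia].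
  - destruct Hcd as [[c' ->]%Z.even_spec [d' ->]%Z.even_spec].
    exists c', d'. split; [rewrite HF, mult_IZR; field; lra | nia].
Qed.

Lemma pell_FD x y nu : (0 < y)%Z -> (nu = 1 \/ nu = -1)%Z ->
  (x * x - D * y * y = nu * ellD D)%Z ->
  exists m, (1 <= m)%nat /\ FD D a b m = IZR y /\ minus_one_pow m = nu.
Proof.
  intros Hy Hnu Hxy.
  assert (Hx : (0 < Z.abs x)%Z).
  { pose proof (pell_x_neq0 D x y nu D_gt1 D_sqfree ltac:(lia) Hnu Hxy). lia. }
  assert (Hxy' : (Z.abs x * Z.abs x - D * y * y = nu * ellD D)%Z).
  { rewrite <- Hxy. destruct (Z.abs_spec x) as [[_ ->] | [_ ->]]; ring. }
  destruct (pell_unit D (Z.abs x) y nu D_gt1 Hx Hy Hnu Hxy') as (c & d & Hcd & Hn & Hgt & HF).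
  destruct (unit_ge1_eps_pow c d Hcd ltac:(lra)) as (m & Eval & Econj).
  exists m. split; [|split].
  - destruct m; [simpl in Eval; lra | lia].
  - rewrite (FD_eps_pow c d m Eval Econj). exact HF.
  - apply eq_IZR. rewrite <- Hn. symmetry. exact (qnorm_eps_pow c d m Eval Econj).
Qed.

Lemma FD_pos m : (1 <= m)%nat -> 0 < FD D a b m.
Proof.
  intro Hm. pose proof eps_gt1.
  assert (eps ^ 1 <= eps ^ m) by (apply Rle_pow; [lra | exact Hm]).
  pose proof (abs_qconj_eps_pow_le1 m). pose proof (Rle_abs (eps' ^ m)).
  unfold FD. apply Rdiv_lt_0_compat; [simpl in *; lra | apply sqrt_qD_pos, D_gt1].
Qed.

Lemma FD_ge_eps_pow m : (1 <= m)%nat -> eps ^ m / (1 + sqrt (qD D)) <= FD D a b m.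
Proof.
  intro Hm. pose proof (sqrt_qD_pos D D_gt1) as Hr.
  assert (Hge1 : 1 <= FD D a b m).
  { pose proof (FD_pos m Hm) as Hpos. destruct (FD_pell m) as (x & y & Hy & _).
    rewrite Hy in *. apply lt_IZR in Hpos. apply IZR_le. lia. }
  pose proof (abs_qconj_eps_pow_le1 m). pose proof (Rle_abs (eps' ^ m)).
  assert (FD D a b m * sqrt (qD D) = eps ^ m - eps' ^ m) by (unfold FD; field; lra).
  apply Rmult_le_reg_r with (1 + sqrt (qD D)); [lra|].
  unfold Rdiv. rewrite Rmult_assoc, Rinv_l, Rmult_1_r by lra. lra.
Qed.

(* With [u = eps^-1 = -eps'], the claim reduces to [eps^2 - 1 > 1 - u^2], i.e. [(eps - u)^2 > 0]. *)
Lemma FD_lt_add2 m : FD D a b m < FD D a b (m + 2).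
Proof.
  pose proof eps_gt1 as He. pose proof (abs_qconj_eps_pow_le1 m) as Ha.
  pose proof (pow_R1_Rle eps m ltac:(lra)) as Hp.
  unfold FD. apply Rmult_lt_compat_r; [apply Rinv_0_lt_compat, sqrt_qD_pos, D_gt1|].
  rewrite !pow_add. simpl. rewrite Rmult_1_r.
  set (t := eps' ^ m) in *. rewrite qconj_eps. set (u := / eps).
  assert (Heu : eps * u = 1) by (unfold u; field; lra).
  assert (0 < u < 1).
  { unfold u. split; [apply Rinv_0_lt_compat; lra|].
    rewrite <- Rinv_1. apply Rinv_lt_contravar; lra. }
  apply Rabs_le_between in Ha.
  assert (0 <= (1 + t) * (1 - u * u)) by (apply Rmult_le_pos; nra).
  assert (0 <= (eps ^ m - 1) * (eps * eps - 1)) by (apply Rmult_le_pos; nra).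
  assert (0 < (eps - u) * (eps - u)) by (apply Rmult_lt_0_compat; lra).
  lra.
Qed.

End FundamentalUnit.

Lemma r1_neq0_sqr n : r1 n <> 0 -> exists x, (0 <= x /\ x * x = n)%Z.
Proof.
  unfold r1. set (l := filter _ _). intro Hl.
  destruct l as [|x l'] eqn:El; [contradiction Hl; reflexivity|].
  assert (Hx : In x l) by (rewrite El; left; reflexivity).
  apply filter_In in Hx as [_ Hx%Z.eqb_eq].
  exists (Z.abs x). split; [lia|]. rewrite <- Hx.
  destruct (Z.abs_spec x) as [[_ ->] | [_ ->]]; ring.
Qed.

Lemma r1_sqr y : y <> 0%Z -> r1 (y * y) = 2.
Proof.
  intro Hy. unfold r1. set (n := (y * y)%Z).
  set (l := map (fun k => (Z.of_nat k - Z.abs n)%Z) (seq 0 (Z.to_nat (2 * Z.abs n + 1)))).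
  set (f := fun x => Z.eqb (x * x) n).
  assert (Hl : forall x, In x l <-> (- Z.abs n <= x <= Z.abs n)%Z).
  { intro x. unfold l. rewrite in_map_iff. split.
    - intros [k [Ek Hk]]. apply in_seq in Hk. lia.
    - intro Hx. exists (Z.to_nat (x + Z.abs n)). split; [lia|]. apply in_seq. lia. }
  assert (Hnd : NoDup l).
  { apply NoDup_map_NoDup_ForallPairs; [|apply seq_NoDup]. intros u v _ _ E. lia. }
  assert (Hf : incl (filter f l) (y :: (- y)%Z :: nil) /\ incl (y :: (- y)%Z :: nil) (filter f l)).
  { split; intros x Hx.
    - apply filter_In in Hx as [_ Hx%Z.eqb_eq]. unfold n in Hx.
      assert ((x - y) * (x + y) = 0)%Z as [E | E]%Z.mul_eq_0 by lia; simpl; lia.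
    - apply filter_In. rewrite Hl. unfold f. rewrite Z.eqb_eq. unfold n.
      destruct Hx as [<- | [<- | []]]; split; nia. }
  assert (Hpair : NoDup (y :: (- y)%Z :: nil)).
  { constructor; [simpl; lia | constructor; [simpl; tauto | constructor]]. }
  replace (length (filter f l)) with 2%nat; [simpl; lra|].
  apply Nat.le_antisymm.
  - change 2%nat with (length (y :: (- y)%Z :: nil)).
    apply (NoDup_incl_length Hpair), Hf.
  - change 2%nat with (length (y :: (- y)%Z :: nil)).
    apply NoDup_incl_length; [apply NoDup_filter, Hnd | apply Hf].
Qed.

Lemma Cmod_cpow_neg x s : Cmod (cpow_neg x s) = exp (- Re s * ln x).
Proof.
  unfold cpow_neg, Cmod. simpl.
  set (E := exp (- Re s * ln x)). set (t := - Im s * ln x).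
  replace (E * cos t * (E * cos t * 1) + E * sin t * (E * sin t * 1))
    with (E * E * (Rsqr (sin t) + Rsqr (cos t))) by (unfold Rsqr; ring).
  rewrite sin2_cos2, Rmult_1_r. apply sqrt_square. unfold E. pose proof (exp_pos (- Re s * ln x)). lra.
Qed.

Lemma cpow_neg_sqr_half y s : 0 < y -> cpow_neg (y * y) (Cmult s (RtoC (/ 2))) = cpow_neg y s.
Proof.
  intro Hy. unfold cpow_neg. rewrite ln_mult by assumption.
  destruct s as [sr si]. unfold Cmult, RtoC, Re, Im. simpl.
  f_equal; f_equal; f_equal; field.
Qed.

(* [|u_k^-s| = u_k^-Re s <= c^-Re s (q^-Re s)^k], a convergent geometric series. *)
Lemma ex_series_cpow_neg_geometric (u : nat -> R) (c q : R) (s : C) :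
  0 < c -> 1 < q -> 0 < Re s -> (forall k, c * q ^ k <= u k) ->
  ex_series (fun k => cpow_neg (u k) s).
Proof.
  intros Hc Hq Hs Hu.
  set (rho := exp (- Re s * ln q)).
  assert (Hrho : 0 < rho < 1).
  { split; [apply exp_pos|]. rewrite <- exp_0. apply exp_increasing.
    assert (0 < ln q) by (rewrite <- ln_1; apply ln_increasing; lra). nra. }
  apply (@ex_series_le C_AbsRing C_CompleteNormedModule _ (fun k => scal (exp (- Re s * ln c)) (rho ^ k))).
  - intro k. change norm with Cmod. rewrite Cmod_cpow_neg.
    assert (Hck : 0 < c * q ^ k) by (apply Rmult_lt_0_compat; [lra | apply pow_lt; lra]).
    apply Rle_trans with (exp (- Re s * ln (c * q ^ k))).
    + assert (Hln : ln (c * q ^ k) <= ln (u k)) by (apply ln_le; [exact Hck | apply Hu]).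
      assert (Hle : - Re s * ln (u k) <= - Re s * ln (c * q ^ k)) by nra.
      destruct Hle as [Hlt | ->]; [apply Rlt_le, exp_increasing, Hlt | apply Rle_refl].
    + rewrite ln_mult, ln_pow, Rmult_plus_distr_l, exp_plus by (try apply pow_lt; lra).
      replace (- Re s * (INR k * ln q)) with (INR k * (- Re s * ln q)) by ring.
      rewrite <- (Rpower_pow k rho) by apply Hrho. unfold Rpower, rho. rewrite ln_exp. apply Rle_refl.
  - apply (@ex_series_scal R_AbsRing R_NormedModule). exists (/ (1 - rho)). apply is_series_geom.
    rewrite Rabs_pos_eq; lra.
Qed.

Section Reindexing.

Context {K : AbsRing} {V : NormedModule K}.

(* Unlike [sum_n], [partial_sum f 0] is the empty sum. *)
Fixpoint partial_sum (f : nat -> V) (n : nat) : V :=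
  match n with O => zero | S n => plus (partial_sum f n) (f n) end.

Lemma partial_sum_succ f n : partial_sum f (S n) = sum_n f n.
Proof.
  induction n as [|n IH].
  - simpl. rewrite sum_O. apply plus_zero_l.
  - change (partial_sum f (S (S n))) with (plus (partial_sum f (S n)) (f (S n))).
    rewrite IH, sum_Sn. reflexivity.
Qed.

Variables (a b : nat -> V) (phi : nat -> nat).
Hypothesis phi_lt_succ : forall k, (phi k < phi (S k))%nat.
Hypothesis b_phi : forall k, b (phi k) = a k.
Hypothesis b_off_range : forall j, (forall k, phi k <> j) -> b j = zero.

Lemma phi_lt k k' : (k < k')%nat -> (phi k < phi k')%nat.
Proof.
  induction 1 as [|k' _ IH]; [apply phi_lt_succ|]. specialize (phi_lt_succ k'). lia.
Qed.

Lemma partial_sum_reindex N : exists M,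
  (forall k, (phi k < N)%nat <-> (k < M)%nat) /\ partial_sum b N = partial_sum a M.
Proof.
  induction N as [|N (M & HM & Hsum)]; [exists 0%nat; split; [intro k; lia | reflexivity]|].
  destruct (Nat.eq_dec (phi M) N) as [E | NE].
  - exists (S M). split.
    + intro k. destruct (Nat.lt_trichotomy k M) as [Hk | [-> | Hk]]; split; intro; try lia.
      * apply HM in Hk. lia.
      * pose proof (phi_lt _ _ Hk). lia.
    + simpl. rewrite Hsum, <- E, b_phi. reflexivity.
  - assert (Hnot : forall k, phi k <> N).
    { intros k Ek. destruct (Nat.lt_trichotomy k M) as [Hk | [-> | Hk]].
      - apply HM in Hk. lia.
      - contradiction.
      - pose proof (phi_lt _ _ Hk). assert (~ (phi M < N)%nat) by (rewrite HM; lia). lia. }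
    exists M. split.
    + intro k. rewrite <- HM. specialize (Hnot k). split; intro; lia.
    + simpl. rewrite Hsum, (b_off_range N Hnot). apply plus_zero_r.
Qed.

Lemma is_series_reindex L : is_series a L -> is_series b L.
Proof.
  intros Ha P HP. destruct (Ha P HP) as [N0 HN0].
  exists (phi (S N0)). intros n Hn.
  destruct (partial_sum_reindex (S n)) as ([|M] & HM & Hsum).
  - assert (phi (S N0) < S n)%nat as Hlt%HM by lia. lia.
  - rewrite <- partial_sum_succ, Hsum, partial_sum_succ. apply HN0.
    assert (phi (S N0) < S n)%nat as Hlt%HM by lia. lia.
Qed.

End Reindexing.

Definition dir_term (D nu : Z) (s : C) (k : nat) : C :=
  Cmult (RtoC (/ 4 * r1 (Z.of_nat (S k)) * r1 (D * Z.of_nat (S k) + nu * ellD D)))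
        (cpow_neg (INR (S k)) (Cmult s (RtoC (/ 2)))).

Lemma dir_term_sqr D nu s x y : (0 < y)%Z -> x <> 0%Z ->
  (D * (y * y) + nu * ellD D = x * x)%Z ->
  dir_term D nu s (Z.to_nat (y * y) - 1) = cpow_neg (IZR y) s.
Proof.
  intros Hy Hx Hxy. unfold dir_term.
  replace (Z.of_nat (S (Z.to_nat (y * y) - 1))) with (y * y)%Z by lia.
  rewrite Hxy, !r1_sqr by lia.
  replace (/ 4 * 2 * 2) with 1 by field. rewrite Cmult_1_l.
  replace (INR (S (Z.to_nat (y * y) - 1))) with (IZR y * IZR y).
  - apply cpow_neg_sqr_half, IZR_lt, Hy.
  - rewrite <- mult_IZR, INR_IZR_INZ. f_equal. lia.
Qed.

Lemma odd_even_representative p m : (p = 1 \/ p = 2)%nat -> (1 <= m)%nat ->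
  minus_one_pow m = minus_one_pow p -> exists k, m = (2 * k + p)%nat.
Proof.
  intros Hp Hm Hsign.
  destruct (Nat.Even_or_Odd m) as [[k ->] | [k ->]].
  - rewrite <- (Nat.add_0_r (2 * k)), minus_one_pow_add_double in Hsign.
    destruct Hp as [-> | ->]; [discriminate|]. exists (k - 1)%nat. lia.
  - rewrite minus_one_pow_add_double in Hsign.
    destruct Hp as [-> | ->]; [exists k; reflexivity | discriminate].
Qed.

Section Series.

Variables D a b : Z.
Hypothesis D_gt1 : (1 < D)%Z.
Hypothesis D_sqfree : squarefree D.
Hypothesis eps_fund : isFundUnit D a b.
Hypothesis eps_norm : qnorm D a b = -1.
Variable s : C.
Hypothesis s_pos : 0 < Re s.

Lemma ex_series_FD_cpow_neg p : (1 <= p)%nat ->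
  ex_series (fun k => cpow_neg (FD D a b (2 * k + p)) s).
Proof.
  intro Hp. pose proof (eps_gt1 D a b eps_fund) as He. pose proof (sqrt_qD_pos D D_gt1).
  apply (ex_series_cpow_neg_geometric _ (qval D a b ^ p / (1 + sqrt (qD D))) (qval D a b ^ 2));
    [apply Rdiv_lt_0_compat; [apply pow_lt|]; lra | nra | exact s_pos |].
  intro k. eapply Rle_trans; [|apply FD_ge_eps_pow; trivial; lia].
  rewrite <- pow_mult, pow_add. apply Req_le. field. lra.
Qed.

Lemma FD_pell_seq : exists y : nat -> Z, forall m, FD D a b m = IZR (y m) /\
  exists x, (x * x - D * y m * y m = minus_one_pow m * ellD D)%Z.
Proof.
  assert (H : forall m, {y : Z | FD D a b m = IZR y /\
                         exists x, (x * x - D * y * y = minus_one_pow m * ellD D)%Z}).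
  { intro m. apply constructive_indefinite_description.
    destruct (FD_pell D a b D_gt1 eps_fund eps_norm m) as (x & y & Hy & Hxy).
    exists y. split; [exact Hy | exists x; exact Hxy]. }
  exists (fun m => proj1_sig (H m)). intro m. exact (proj2_sig (H m)).
Qed.

Lemma dir_term_eq0 p j : (p = 1 \/ p = 2)%nat ->
  (forall k y, FD D a b (2 * k + p) = IZR y -> Z.of_nat (S j) <> (y * y)%Z) ->
  dir_term D (minus_one_pow p) s j = 0.
Proof.
  intros Hp Hj. unfold dir_term.
  destruct (Req_dec (r1 (Z.of_nat (S j))) 0) as [E | (y & Hy0 & Ey)%r1_neq0_sqr];
    [rewrite E, Rmult_0_r, Rmult_0_l; apply Cmult_0_l|].
  destruct (Req_dec (r1 (D * Z.of_nat (S j) + minus_one_pow p * ellD D)) 0)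
    as [E | (x & _ & Ex)%r1_neq0_sqr]; [rewrite E, Rmult_0_r; apply Cmult_0_l|].
  exfalso.
  assert (Hnu : (minus_one_pow p = 1 \/ minus_one_pow p = -1)%Z)
    by (destruct Hp as [-> | ->]; auto).
  destruct (pell_FD D a b D_gt1 D_sqfree eps_fund eps_norm x y (minus_one_pow p) ltac:(lia) Hnu)
    as (m & Hm & Hy & Hsign); [rewrite Ex, <- Ey; ring|].
  destruct (odd_even_representative p m Hp Hm Hsign) as [k ->].
  exact (Hj k y Hy (eq_sym Ey)).
Qed.

Lemma is_series_FD_dir_term p : (p = 1 \/ p = 2)%nat -> exists L,
  is_series (fun k => cpow_neg (FD D a b (2 * k + p)) s) L /\
  is_series (dir_term D (minus_one_pow p) s) L.
Proof.
  intro Hp.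
  destruct (ex_series_FD_cpow_neg p ltac:(lia)) as [L HL]. exists L. split; [exact HL|].
  destruct FD_pell_seq as [y Hy].
  set (yk k := y (2 * k + p)%nat).
  assert (HF : forall k, FD D a b (2 * k + p) = IZR (yk k)) by (intro k; apply Hy).
  assert (Hpos : forall k, (0 < yk k)%Z).
  { intro k. apply lt_IZR. rewrite <- HF. apply (FD_pos D a b D_gt1 eps_fund eps_norm). lia. }
  apply (is_series_reindex (fun k => cpow_neg (FD D a b (2 * k + p)) s) _
           (fun k => Z.to_nat (yk k * yk k) - 1)%nat); [| | | exact HL].
  - intro k. assert (Hlt : (yk k < yk (S k))%Z).
    { apply lt_IZR. rewrite <- !HF.
      replace (2 * S k + p)%nat with (2 * k + p + 2)%nat by lia. apply FD_lt_add2; assumption. }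
    pose proof (Hpos k). nia.
  - intro k. destruct (Hy (2 * k + p)%nat) as [_ [x Hx]]. fold (yk k) in Hx.
    rewrite minus_one_pow_add_double in Hx. rewrite HF.
    apply (dir_term_sqr D _ s x); [apply Hpos | | lia].
    apply (pell_x_neq0 D x (yk k) (minus_one_pow p) D_gt1 D_sqfree);
      [pose proof (Hpos k); lia | destruct Hp as [-> | ->]; auto | exact Hx].
  - intros j Hj. apply (dir_term_eq0 p j Hp). intros k z Hz Ej.
    apply (Hj k). rewrite HF in Hz. apply eq_IZR in Hz. subst z. lia.
Qed.

End Series.

Lemma dir_odd_term_eq D s k : dir_odd_term D s k = dir_term D (-1) s k.
Proof.
  unfold dir_odd_term, dir_term.
  replace (D * Z.of_nat (S k) + -1 * ellD D)%Z with (D * Z.of_nat (S k) - ellD D)%Z by ring.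
  reflexivity.
Qed.

Lemma dir_even_term_eq D s k : dir_even_term D s k = dir_term D 1 s k.
Proof. unfold dir_even_term, dir_term. rewrite Z.mul_1_l. reflexivity. Qed.

Theorem mainTheorem10 (D a b : Z) (s : C) :
  (1 < D)%Z -> squarefree D ->
  isFundUnit D a b -> qnorm D a b = -1 ->
  0 < Re s ->
  (exists L : C, is_series (Zodd_term D a b s) L /\ is_series (dir_odd_term D s) L) /\
  (exists L : C, is_series (Zeven_term D a b s) L /\ is_series (dir_even_term D s) L).
Proof.
  intros HD Hsq Hfund Hnorm Hs. split.
  - destruct (is_series_FD_dir_term D a b HD Hsq Hfund Hnorm s Hs 1 ltac:(lia)) as (L & HZ & Hdir).
    exists L. split; [exact HZ|].
    apply (is_series_ext (dir_term D (-1) s)); [intro k; symmetry; apply dir_odd_term_eq | exact Hdir].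
  - destruct (is_series_FD_dir_term D a b HD Hsq Hfund Hnorm s Hs 2 ltac:(lia)) as (L & HZ & Hdir).
    exists L. split; [exact HZ|].
    apply (is_series_ext (dir_term D 1 s)); [intro k; symmetry; apply dir_even_term_eq | exact Hdir].
Qed.
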